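(* Let $G=(V,E,w)$ be a connected undirected graph with positive edge weights, $|V|=n$, and weighted Laplacian $\mathbf{L}$. Let $v\in V$ and let $e=\{u,v\}\notin E$, $u\neq v$, be a candidate edge with given weight $w(e)>0$, and set $\mathbf{b}_e=\mathbf{e}_u-\mathbf{e}_v$ (either orientation). Let $\mathcal{R}_v^\Delta(e)=\mathcal{R}_v(G)-\mathcal{R}_v(G+e)$, where $G+e$ is $G$ with edge $e$ of weight $w(e)$ added. Then $$\mathcal{R}_v^\Delta(e)=\frac{w(e)\left(n\left(\mathbf{L}^\dagger\mathbf{b}_e\mathbf{b}_e^\top\mathbf{L}^\dagger\right)_{vv}+\operatorname{Tr}\left(\mathbf{L}^\dagger\mathbf{b}_e\mathbf{b}_e^\top\mathbf{L}^\dagger\right)\right)}{1+w(e)\,\mathbf{b}_e^\top\mathbf{L}^\dagger\mathbf{b}_e}.$$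
   Context: The Laplacian of a weighted graph is $\mathbf{L}=\mathbf{D}-\mathbf{A}$ with $\mathbf{A}$ the weighted adjacency matrix and $\mathbf{D}$ the diagonal weighted degree matrix; $\mathbf{L}^\dagger$ is its Moore–Penrose pseudoinverse; $\mathbf{e}_i$ are standard basis vectors. The resistance distance between nodes $a,b$ is $\mathcal{R}_{ab}=(\mathbf{e}_a-\mathbf{e}_b)^\top\mathbf{L}^\dagger(\mathbf{e}_a-\mathbf{e}_b)$, and the resistance distance of node $v$ in a graph is $\mathcal{R}_v=\sum_{u\in V}\mathcal{R}_{uv}$. *)

From mathcomp Require Import all_boot all_order all_algebra.
Set Implicit Arguments. Unset Strict Implicit. Unset Printing Implicit Defensive.
Import Order.TTheory GRing.Theory Num.Theory.
Local Open Scope ring_scope.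

Definition degmx (R : realFieldType) (n : nat) (A : 'M[R]_n) : 'M[R]_n :=
  diag_mx (\row_i \sum_j A i j).
Definition laplacian (R : realFieldType) (n : nat) (A : 'M[R]_n) : 'M[R]_n :=
  degmx A - A.

(* A is the weighted adjacency matrix of an undirected graph with positive
   edge weights and no self loops: edge {i,j} present iff A i j > 0 *)
Definition weighted_graph (R : realFieldType) (n : nat) (A : 'M[R]_n) : Prop :=
  (forall i j, A i j = A j i) /\ (forall i, A i i = 0) /\ (forall i j, 0 <= A i j).

Definition edge_rel (R : realFieldType) (n : nat) (A : 'M[R]_n) : rel 'I_n :=
  fun i j => 0 < A i j.

Definition connected_graph (R : realFieldType) (n : nat) (A : 'M[R]_n) : Prop :=
  forall i j : 'I_n, connect (edge_rel A) i j.

(* X is the Moore-Penrose pseudoinverse of M (real entries: ^T = conj. transpose) *)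
Definition is_MPinv (R : realFieldType) (n : nat) (M X : 'M[R]_n) : Prop :=
  [/\ M *m X *m M = M, X *m M *m X = X,
      (M *m X)^T = M *m X & (X *m M)^T = X *m M].

Definition evec (R : realFieldType) (n : nat) (i : 'I_n) : 'cV[R]_n :=
  delta_mx i 0.

(* resistance distance R_ab computed from the pseudoinverse Lp of L *)
Definition resist (R : realFieldType) (n : nat) (Lp : 'M[R]_n) (a b : 'I_n) : R :=
  ((evec R a - evec R b)^T *m Lp *m (evec R a - evec R b)) 0 0.

Definition node_resist (R : realFieldType) (n : nat) (Lp : 'M[R]_n) (v : 'I_n) : R :=
  \sum_u resist Lp u v.

Definition add_edge (R : realFieldType) (n : nat) (A : 'M[R]_n) (u v : 'I_n) (w : R)
  : 'M[R]_n := A + w *: (delta_mx u v + delta_mx v u).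

(* Adding the edge {u, v} of weight w turns the Laplacian L into the rank-one
   update L + w b b^T with b = e_u - e_v.  The entries of b sum to zero and the
   graph is connected, so b lies in the range of L, and the Sherman-Morrison
   formula carries over to the Moore-Penrose pseudoinverse:
     (L + w b b^T)^+ = L^+ - w / (1 + w b^T L^+ b) * L^+ b b^T L^+.
   The node resistance is linear in the pseudoinverse and equals
   n X_vv + Tr X for any symmetric X annihilating the all-ones vector, which
   the correction term L^+ b b^T L^+ is. *)

From mathcomp Require Import all_boot all_order all_algebra ring.
Import Order.TTheory GRing.Theory Num.Theory.
Local Open Scope ring_scope.

Section MoorePenrose.
Context {R : realFieldType} {n : nat}.
Implicit Types (M X Y : 'M[R]_n) (b x : 'cV[R]_n).

Lemma mpinv_unique M X Y : is_MPinv M X -> is_MPinv M Y -> X = Y.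
Proof.
case=> MXM XMX MX_sym XM_sym [MYM YMY MY_sym YM_sym].
have XE : X = X *m M *m Y.
  have X_MT : X = X *m X^T *m M^T by rewrite -mulmxA -trmx_mul MX_sym mulmxA XMX.
  have MT_MY : M^T = M^T *m (M *m Y) by rewrite -MY_sym -trmx_mul MYM.
  by rewrite {1}X_MT MT_MY mulmxA -(mulmxA X) -trmx_mul MX_sym !mulmxA XMX.
have YE : Y = X *m M *m Y.
  have Y_MT : Y = M^T *m Y^T *m Y by rewrite -trmx_mul YM_sym YMY.
  have MT_XM : M^T = X *m M *m M^T by rewrite -XM_sym -trmx_mul mulmxA MXM.
  rewrite {1}Y_MT MT_XM -(mulmxA _ M^T) -trmx_mul YM_sym.
  by rewrite -!mulmxA (mulmxA Y) YMY.
by rewrite XE -YE.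
Qed.

Lemma mpinv_trmx M X : is_MPinv M X -> is_MPinv M^T X^T.
Proof.
case=> MXM XMX MX_sym XM_sym; split.
- by rewrite -!trmx_mul mulmxA MXM.
- by rewrite -!trmx_mul mulmxA XMX.
- by rewrite -trmx_mul XM_sym.
- by rewrite -trmx_mul MX_sym.
Qed.

Section Symmetric.
Context {M X : 'M[R]_n}.
Hypotheses (M_sym : M^T = M) (pinvX : is_MPinv M X).

Lemma mpinv_sym : X^T = X.
Proof. by apply: (@mpinv_unique M) => //; rewrite -{1}M_sym; apply: mpinv_trmx. Qed.

Lemma mpinv_comm : M *m X = X *m M.
Proof. by case: pinvX => _ _ <- _; rewrite trmx_mul mpinv_sym M_sym. Qed.

Lemma mpinv_ker x : M *m x = 0 -> X *m x = 0.
Proof.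
case: pinvX => _ XMX _ _ Mx.
by rewrite -XMX -(mulmxA X M) mpinv_comm -!mulmxA Mx !mulmx0.
Qed.

(* Sherman-Morrison, valid for the pseudoinverse as long as [b] lies in the
   range of [M], i.e. is fixed by the projection [M X]. *)
Lemma mpinv_rank1_update b w :
  let s := (b^T *m X *m b) 0 0 in
  M *m X *m b = b -> 1 + w * s != 0 ->
  is_MPinv (M + w *: (b *m b^T)) (X - (w / (1 + w * s)) *: (X *m b *m b^T *m X)).
Proof.
move=> s Pb den; set c := w / (1 + w * s); set N := X *m b *m b^T *m X.
have [MXM XMX MX_sym _] := pinvX.
have bXb : b^T *m X *m b = s%:M by apply: mx11_scalar.
have MN : M *m N = b *m b^T *m X by rewrite /N !mulmxA Pb.
have bbN : b *m b^T *m N = s *: (b *m b^T *m X).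
  rewrite /N -!mulmxA (mulmxA b^T X) (mulmxA (b^T *m X) b) bXb mul_scalar_mx.
  by rewrite -scalemxAr !mulmxA.
have PX : M *m X *m X = X by rewrite mpinv_comm XMX.
have PN : M *m X *m N = N by rewrite /N !mulmxA PX.
have M'X' : (M + w *: (b *m b^T)) *m (X - c *: N) = M *m X.
  rewrite mulmxDl !mulmxBr -!scalemxAr -!scalemxAl MN bbN !scalerA -scalerBl.
  have -> : w - c * w * s = c by rewrite /c; field.
  by rewrite addrNK.
have sym_update : (M + w *: (b *m b^T))^T = M + w *: (b *m b^T).
  by rewrite linearD linearZ /= trmx_mul trmxK M_sym.
have N_sym : N^T = N by rewrite /N !trmx_mul trmxK mpinv_sym !mulmxA.
have X'M' : (X - c *: N) *m (M + w *: (b *m b^T)) = M *m X.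
  rewrite -[LHS]trmxK trmx_mul sym_update linearB linearZ /= N_sym mpinv_sym.
  by rewrite M'X' MX_sym.
split.
- by rewrite M'X' mulmxDr -scalemxAr !mulmxA Pb MXM.
- by rewrite X'M' mulmxBr -scalemxAr PX PN.
- by rewrite M'X'.
- by rewrite X'M'.
Qed.
End Symmetric.
End MoorePenrose.

Arguments mpinv_unique {R n M X Y}.

Lemma const_cV_eq0 (R : numDomainType) (n : nat) (y : 'cV[R]_n) :
  (forall i j, y i 0 = y j 0) -> \sum_i y i 0 = 0 -> y = 0.
Proof.
move=> y_const sum0; apply/matrixP => i j; rewrite ord1 mxE; move: sum0.
under eq_bigr do rewrite (y_const _ i).
rewrite sumr_const card_ord -mulr_natl => /eqP; rewrite mulf_eq0 pnatr_eq0.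
by rewrite (gtn_eqF (leq_ltn_trans (leq0n i) (ltn_ord i))) => /eqP.
Qed.

Lemma sum_mulmx_eq0 (R : comPzRingType) (n : nat) (B : 'M[R]_n) (z : 'cV[R]_n) :
  B^T *m (const_mx 1 : 'cV[R]_n) = 0 -> \sum_i (B *m z) i 0 = 0.
Proof.
move=> colsum0; under eq_bigr do rewrite mxE.
rewrite exchange_big big1 // => j _; rewrite -big_distrl /=.
suff -> : \sum_i B i j = (B^T *m (const_mx 1 : 'cV[R]_n)) j 0.
  by rewrite colsum0 mxE mul0r.
by rewrite mxE; apply: eq_bigr => i _; rewrite !mxE mulr1.
Qed.

Section Laplacian.
Context {R : realFieldType} {n : nat}.
Implicit Types (A B : 'M[R]_n) (x y : 'cV[R]_n).
Local Notation ones := (const_mx 1 : 'cV[R]_n).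

Lemma laplacianE A i j : laplacian A i j = (\sum_k A i k) *+ (i == j) - A i j.
Proof. by rewrite /laplacian /degmx !mxE. Qed.

Lemma degmxD A B : degmx (A + B) = degmx A + degmx B.
Proof.
apply/matrixP => i j; rewrite !mxE -mulrnDl -big_split.
by congr (_ *+ _); apply: eq_bigr => k _; rewrite mxE.
Qed.

Lemma degmxZ a A : degmx (a *: A) = a *: degmx A.
Proof.
apply/matrixP => i j; rewrite !mxE mulrnAr mulr_sumr.
by congr (_ *+ _); apply: eq_bigr => k _; rewrite mxE.
Qed.

Lemma degmx_delta (a b : 'I_n) : degmx (delta_mx a b) = delta_mx a a :> 'M[R]_n.
Proof.
apply/matrixP => i j; rewrite !mxE (bigD1 b) //= big1 => [|k /negbTE kb]; last first.
  by rewrite mxE kb andbF.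
rewrite mxE eqxx andbT addr0.
case: (eqVneq i j) => [<- | ij]; first by rewrite andbb mulr1n.
rewrite mulr0n; case: (i =P a) => [ia | //].
by rewrite -ia eq_sym (negbTE ij).
Qed.

Lemma laplacianD A B : laplacian (A + B) = laplacian A + laplacian B.
Proof. by rewrite /laplacian degmxD opprD addrACA. Qed.

Lemma laplacianZ a A : laplacian (a *: A) = a *: laplacian A.
Proof. by rewrite /laplacian degmxZ scalerBr. Qed.

Lemma laplacian_edge (u v : 'I_n) :
  laplacian (delta_mx u v + delta_mx v u) =
  (evec R u - evec R v) *m (evec R u - evec R v)^T.
Proof.
rewrite /laplacian degmxD !degmx_delta /evec linearB /= !trmx_delta.
rewrite mulmxBl !mulmxBr !mul_delta_mx.
by rewrite opprD opprB addrACA addrC.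
Qed.

Lemma laplacian_add_edge A (u v : 'I_n) w :
  laplacian (add_edge A u v w) =
  laplacian A + w *: ((evec R u - evec R v) *m (evec R u - evec R v)^T).
Proof. by rewrite /add_edge laplacianD laplacianZ laplacian_edge. Qed.

Lemma laplacian_mulE A x i : (laplacian A *m x) i 0 = \sum_j A i j * (x i 0 - x j 0).
Proof.
rewrite mxE; under eq_bigr do rewrite laplacianE mulrBl.
rewrite sumrB (bigD1 i) //= [\sum_(j | j != i) _]big1 ?addr0; last first.
  by move=> j; rewrite eq_sym => /negbTE ->; rewrite mulr0n mul0r.
by rewrite eqxx mulr1n big_distrl -sumrB; apply: eq_bigr => j _; rewrite mulrBr.
Qed.

Lemma laplacian_ones A : laplacian A *m ones = 0.
Proof.
apply/matrixP => i j; rewrite ord1 laplacian_mulE [RHS]mxE big1 // => k _.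
by rewrite !mxE subrr mulr0.
Qed.

Section Weighted.
Context {A : 'M[R]_n}.
Hypothesis A_sym : forall i j, A i j = A j i.

Lemma laplacian_sym : (laplacian A)^T = laplacian A.
Proof.
apply/matrixP => i j; rewrite mxE !laplacianE A_sym.
by case: (eqVneq i j) => [-> | /negbTE ij]; rewrite // eq_sym ij.
Qed.

Lemma laplacian_quad x :
  2 * (x^T *m laplacian A *m x) 0 0 = \sum_i \sum_j A i j * (x i 0 - x j 0) ^+ 2.
Proof.
have -> : (x^T *m laplacian A *m x) 0 0 =
          \sum_i \sum_j A i j * (x i 0 * (x i 0 - x j 0)).
  rewrite -mulmxA mxE; apply: eq_bigr => i _.
  by rewrite mxE laplacian_mulE big_distrr; apply: eq_bigr => j _; rewrite mulrCA.
rewrite mulr_natl mulr2n {2}exchange_big -big_split; apply: eq_bigr => i _.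
by rewrite -big_split; apply: eq_bigr => j _; rewrite /= (A_sym j i); ring.
Qed.

Hypothesis A_ge0 : forall i j, 0 <= A i j.

Lemma laplacian_psd x : 0 <= (x^T *m laplacian A *m x) 0 0.
Proof.
rewrite -(pmulr_rge0 _ (ltr0Sn _ 1)) laplacian_quad.
by apply: sumr_ge0 => i _; apply: sumr_ge0 => j _; rewrite mulr_ge0 ?sqr_ge0.
Qed.

Hypothesis A_connected : connected_graph A.

Lemma laplacian_ker_const y : laplacian A *m y = 0 -> forall i j, y i 0 = y j 0.
Proof.
move=> Ly.
have terms0 : \sum_i \sum_j A i j * (y i 0 - y j 0) ^+ 2 = 0.
  by rewrite -laplacian_quad -mulmxA Ly mulmx0 mxE mulr0.
have term_ge0 i j : 0 <= A i j * (y i 0 - y j 0) ^+ 2.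
  by rewrite mulr_ge0 ?sqr_ge0.
have edge_const i j : 0 < A i j -> y i 0 = y j 0.
  move=> Aij_gt0; have /psumr_eq0P row0 := terms0.
  have /psumr_eq0P :=
    row0 (fun i' _ => sumr_ge0 _ (fun j' _ => term_ge0 i' j')) i isT.
  move=> /(_ (fun j' _ => term_ge0 i j') j isT) /eqP.
  by rewrite mulf_eq0 sqrf_eq0 subr_eq0 gt_eqF //= => /eqP.
move=> i j; case/connectP: (A_connected i j) => p + ->.
elim: p i => [|k p IH] i //= /andP[ik path_p].
by rewrite (edge_const _ _ ik) IH.
Qed.

Context {X : 'M[R]_n}.
Hypothesis pinvX : is_MPinv (laplacian A) X.

Lemma laplacian_pinv_ones : X *m ones = 0.
Proof. by apply: (mpinv_ker laplacian_sym pinvX); apply: laplacian_ones. Qed.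

Lemma laplacian_pinv_psd x : 0 <= (x^T *m X *m x) 0 0.
Proof.
have [_ XLX _ _] := pinvX.
have -> : x^T *m X *m x = (X *m x)^T *m laplacian A *m (X *m x).
  by rewrite trmx_mul (mpinv_sym laplacian_sym pinvX) -[in LHS]XLX !mulmxA.
exact: laplacian_psd.
Qed.

Lemma laplacian_pinv_sum0K x : \sum_i x i 0 = 0 -> laplacian A *m X *m x = x.
Proof.
move=> sum0; have [LXL _ _ _] := pinvX.
rewrite (mpinv_comm laplacian_sym pinvX).
set y := x - X *m laplacian A *m x.
suff : y = 0 by move/eqP; rewrite subr_eq0 => /eqP.
apply: const_cV_eq0.
  by apply: laplacian_ker_const; rewrite mulmxBr !mulmxA LXL subrr.
have -> : \sum_i y i 0 = \sum_i x i 0 - \sum_i (X *m (laplacian A *m x)) i 0.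
  by rewrite -sumrB; apply: eq_bigr => i _; rewrite /y -mulmxA !mxE.
rewrite sum0 sum_mulmx_eq0 ?subrr //.
by rewrite (mpinv_sym laplacian_sym pinvX) laplacian_pinv_ones.
Qed.

End Weighted.
End Laplacian.

Section Resistance.
Context {R : realFieldType} {n : nat}.
Implicit Types (X Y : 'M[R]_n).

Lemma sum_evec (a : 'I_n) : \sum_i evec R a i 0 = 1.
Proof.
rewrite (bigD1 a) //= big1 => [|i /negbTE ia]; first by rewrite mxE !eqxx addr0.
by rewrite mxE ia.
Qed.

Lemma sum_evecB (a c : 'I_n) : \sum_i (evec R a - evec R c) i 0 = 0.
Proof.
rewrite (eq_bigr (fun i => evec R a i 0 - evec R c i 0)) => [|i _]; last first.
  by rewrite !mxE.
by rewrite sumrB !sum_evec subrr.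
Qed.

Lemma evec_quad X a b : ((evec R a)^T *m X *m evec R b) 0 0 = X a b.
Proof. by rewrite /evec trmx_delta -rowE -colE !mxE. Qed.

Lemma resistE X a b : resist X a b = X a a - X a b - X b a + X b b.
Proof.
rewrite /resist mulmxBr [(_ - _)^T]linearB /= !mulmxBl.
do 3!rewrite [((_ - _ : 'M[R]_1) _ _)]mxE [((- _ : 'M[R]_1) _ _)]mxE.
by rewrite !evec_quad; ring.
Qed.

Lemma node_resistB X Y v : node_resist (X - Y) v = node_resist X v - node_resist Y v.
Proof.
rewrite /node_resist -sumrB; apply: eq_bigr => u _.
by rewrite !resistE !mxE; ring.
Qed.

Lemma node_resistZ a X v : node_resist (a *: X) v = a * node_resist X v.
Proof.
rewrite /node_resist mulr_sumr; apply: eq_bigr => u _.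
by rewrite !resistE !mxE; ring.
Qed.

Lemma node_resistE X v : X^T = X -> X *m (const_mx 1 : 'cV[R]_n) = 0 ->
  node_resist X v = n%:R * X v v + \tr X.
Proof.
move=> X_sym X_ones.
have row0 : \sum_u X v u = 0.
  have := congr1 (fun x : 'cV[R]_n => x v 0) X_ones; rewrite !mxE => rowE.
  by rewrite -[RHS]rowE; apply: eq_bigr => u _; rewrite mxE mulr1.
have col0 : \sum_u X u v = 0.
  by rewrite -[RHS]row0; apply: eq_bigr => u _; rewrite -{1}X_sym mxE.
rewrite /node_resist; under eq_bigr do rewrite resistE.
rewrite big_split /= !sumrB col0 row0 !subr0 sumr_const card_ord mulr_natl.
by rewrite addrC.
Qed.

End Resistance.

Theorem lemma2 (R : realFieldType) (n : nat) (A : 'M[R]_n) (u v : 'I_n) (w : R)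
    (Lp Lp' : 'M[R]_n) :
  weighted_graph A -> connected_graph A ->
  u != v -> A u v = 0 -> 0 < w ->
  is_MPinv (laplacian A) Lp ->
  is_MPinv (laplacian (add_edge A u v w)) Lp' ->
  let b := evec R u - evec R v in
  let M := Lp *m b *m b^T *m Lp in
  node_resist Lp v - node_resist Lp' v =
    w * (n%:R * M v v + \tr M) / (1 + w * (b^T *m Lp *m b) 0 0).
Proof.
move=> [A_sym [_ A_ge0]] A_conn _ _ w_gt0 pinvLp pinvLp' b M.
set s := (b^T *m Lp *m b) 0 0.
have Lp_sym := mpinv_sym (laplacian_sym A_sym) pinvLp.
have Lp_ones := laplacian_pinv_ones A_sym pinvLp.
have s_ge0 : 0 <= s by apply: laplacian_pinv_psd.
have den_gt0 : 0 < 1 + w * s by rewrite ltr_pwDl // mulr_ge0 // ltW.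
have Lp'E : Lp' = Lp - (w / (1 + w * s)) *: M.
  apply: mpinv_unique pinvLp' _; rewrite laplacian_add_edge.
  apply: (mpinv_rank1_update (laplacian_sym A_sym) pinvLp); last by rewrite gt_eqF.
  exact: laplacian_pinv_sum0K (sum_evecB u v).
have M_sym : M^T = M by rewrite /M !trmx_mul trmxK Lp_sym !mulmxA.
have M_ones : M *m (const_mx 1 : 'cV[R]_n) = 0 by rewrite /M -mulmxA Lp_ones mulmx0.
rewrite -node_resistB Lp'E opprB addrC subrK node_resistZ node_resistE //.
by rewrite mulrAC.
Qed.
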